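(* Let $m\ge3$ be an integer, $\beta=\frac{m+\sqrt{m^2-4}}{2}$, $\alpha=1/\beta$, and let $\mathbf U=(U_k)$ be given by $U_{-1}=0$, $U_0=1$, $U_{k+1}=mU_k-U_{k-1}$. Let $n\ge1$ with $(n)_{\mathbf U}=a_Na_{N-1}\cdots a_1a_0$, let $b_0$ be the last digit of $(n+1)_{\mathbf U}$, and let $\Delta P_\alpha(n)=P_\alpha(n+1)-P_\alpha(n)$. Then: (i) if $b_0=0$, the string $a_Na_{N-1}\cdots a_1$ is the $\mathbf U$-expansion of $n+\Delta P_\alpha(n)-1$; (ii) if $b_0\ne0$, the string $a_Na_{N-1}\cdots a_1$ is the $\mathbf U$-expansion of $\Delta P_\alpha(n)-1$. (Here the empty string is the $\mathbf U$-expansion of $0$.)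
   Context: $\mathbf U$-expansion: for $n\ge1$, $(n)_{\mathbf U}=a_N\cdots a_0$ is the unique string of non-negative integers with $a_N\ne0$, $n=\sum_{k=0}^N a_kU_k$ and $\sum_{k=0}^i a_kU_k<U_{i+1}$ for all $i\le N$ (the greedy representation); the expansion of $0$ is the empty word. For irrational $\alpha\in(0,1)$, $P_\alpha(n)$ denotes the number of factors $u$ of length $n$ of a Sturmian sequence (aperiodic binary sequence in which any two factors of equal length differ by at most $1$ in the number of occurrences of each letter) over $\{a,b\}$ with frequency of $b$ equal to $\alpha$ such that $(|u|_a,|u|_b)=(\lfloor(1-\alpha)n\rfloor,\lceil n\alpha\rceil)$; equivalently $P_\alpha(n)=\#\{k\in\{1,\dots,n\}:\{k\alpha\}\le\{n\alpha\}\}$. *)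

From HB Require Import structures.
From mathcomp Require Import all_boot all_order all_algebra.
From mathcomp Require Import reals.
Set Implicit Arguments. Unset Strict Implicit. Unset Printing Implicit Defensive.
Import Order.TTheory GRing.Theory Num.Theory.

(* U_0 = 1, U_1 = m (= m*U_0 - U_{-1} with U_{-1} = 0), U_{k+2} = m U_{k+1} - U_k.
   For m >= 3 the sequence is increasing, so truncated subtraction is exact. *)
Fixpoint Useq (m k : nat) : nat :=
  match k with
  | 0 => 1
  | 1 => m
  | (k'.+1 as k1).+1 => m * Useq m k1 - Useq m k'
  end.

(* A digit string is stored little-endian: s`_k = a_k, so s = [:: a_0; ...; a_N]. *)
Definition Uval (m : nat) (s : seq nat) : nat :=
  \sum_(i < size s) nth 0 s i * Useq m i.

Definition is_Uexp (m : nat) (s : seq nat) (z : int) : Prop :=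
  [/\ (size s == 0) || (last 0 s != 0),
      z = ((Uval m s)%:Z)%R
    & forall i : nat, i < size s ->
        \sum_(k < i.+1) nth 0 s k * Useq m k < Useq m i.+1].

Local Open Scope ring_scope.

Definition fracpart (R : realType) (x : R) : R := x - (Num.floor x)%:~R.

Definition Palpha (R : realType) (alpha : R) (n : nat) : nat :=
  count (fun k : nat => fracpart (k%:R * alpha) <= fracpart (n%:R * alpha))
        (iota 1 n).

(** With [alpha] the root in (0,1) of [x^2 = m x - 1], the recurrence of [U]
    gives [U (k+1) * alpha = U k + alpha^(k+2)].  Hence if [n = sum a_k U_k] is
    greedy, [n * alpha] splits as the integer [sum_(k>=1) a_k U_(k-1)], i.e. the
    number written [a_N ... a_1], plus [sum a_k alpha^(k+1)], which the greedy
    inequalities keep in [0,1).  On the other hand, counting the [k <= n] with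
    [{k alpha} <= {n alpha}] gives
    [P(n+1) - P(n) = floor(n alpha) + 1 - n [{n alpha} >= 1 - alpha]], and
    [{n alpha}] reaches [1 - alpha] exactly when [{(n+1) alpha} < alpha], i.e.
    when the last digit of [n+1] vanishes. *)

From HB Require Import structures.
From mathcomp Require Import all_boot all_order all_algebra.
From mathcomp Require Import reals.
From mathcomp Require Import zify ring lra.
Set Implicit Arguments. Unset Strict Implicit. Unset Printing Implicit Defensive.
Import Order.TTheory GRing.Theory Num.Theory.

Definition Uprefix (m : nat) (d : nat -> nat) (i : nat) : nat :=
  \sum_(k < i.+1) d k * Useq m k.

Lemma UprefixS m d i : Uprefix m d i.+1 = Uprefix m d i + d i.+1 * Useq m i.+1.
Proof. by rewrite /Uprefix big_ord_recr. Qed.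

Section Numeration.
Variable m : nat.
Hypothesis m_ge3 : (3 <= m)%N.
Local Notation U := (Useq m).

Lemma Useq_ltS_rec k : U k < U k.+1 /\ U k.+2 + U k = m * U k.+1.
Proof.
elim: k => [|k [ltUk recUk]]; first by rewrite /=; nia.
have ltUk1 : U k.+1 < U k.+2 by nia.
have -> : U k.+3 = m * U k.+2 - U k.+1 by [].
split=> //; nia.
Qed.

Lemma Useq_ltS k : U k < U k.+1. Proof. by case: (Useq_ltS_rec k). Qed.

Lemma UseqSS k : U k.+2 + U k = m * U k.+1. Proof. by case: (Useq_ltS_rec k). Qed.

Lemma Useq_gt0 k : 0 < U k.
Proof. by elim: k => // k; move/leq_trans; apply; apply: ltnW (Useq_ltS k). Qed.

Lemma leq_Useq : {homo U : i j / i <= j}.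
Proof. by apply: homo_leq => [//|???|k]; [exact: leq_trans | exact: ltnW (Useq_ltS k)]. Qed.

Section Greedy.
Variable d : nat -> nat.
Hypothesis greedy_d : forall i, Uprefix m d i < U i.+1.
Local Notation N := (Uprefix m d).
Local Notation N' := (Uprefix m (fun k => d k.+1)).

(* The second conjunct, for prefixes leaving room [U i], carries the induction:
   a maximal digit [m - 1] forces room in the prefix below it. *)
Lemma Uprefix_shift_bounds i :
  N' i < U i.+1 /\ (N i.+1 + U i.+1 < U i.+2 -> N' i + U i < U i.+1).
Proof.
elim: i => [|i [IHlt IHroom]].
  by have := greedy_d 1; rewrite /Uprefix !big_ord_recr !big_ord0 /=; nia.
have := greedy_d i.+2; rewrite [N i.+2]UprefixS [N' i.+1]UprefixS.
have := UseqSS i; have := UseqSS i.+1; have := Useq_ltS i; have := Useq_ltS i.+1.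
move: IHlt IHroom.
set c := d i.+2; set u0 := U i; set u1 := U i.+1; set u2 := U i.+2; set u3 := U i.+3.
set n1 := N i.+1; set y := N' i => IHlt IHroom lt_u1 lt_u0 rec_u1 rec_u0 greedy_i2.
have room : n1 + m.-1 * u2 < u3 -> n1 + u1 < u2 by nia.
split=> [|room_next].
- case: (ltngtP c m.-1) => [lt|gt|eq]; [nia | nia |].
  have : n1 + m.-1 * u2 < u3 by rewrite -eq.
  by move/room/IHroom; nia.
- case: (ltngtP c (m - 2)) => [lt|gt|eq]; [nia | nia |].
  have : n1 + m.-1 * u2 < u3 by move: room_next; rewrite -/c eq; nia.
  by move/room/IHroom; nia.
Qed.

Lemma greedy_shift i : N' i < U i.+1.
Proof. by case: (Uprefix_shift_bounds i). Qed.

End Greedy.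

End Numeration.

Local Open Scope ring_scope.

(** The fractional part of [n * alpha] when [d] is the expansion of [n]. *)
Definition Ufrac (R : realFieldType) (a : R) (d : nat -> nat) (i : nat) : R :=
  \sum_(k < i.+1) (d k)%:R * a ^+ k.+1.

Lemma UfracS (R : realFieldType) (a : R) d i :
  Ufrac a d i.+1 = Ufrac a d i + (d i.+1)%:R * a ^+ i.+2.
Proof. by rewrite /Ufrac big_ord_recr. Qed.

Lemma Ufrac_ge0 (R : realFieldType) (a : R) d i : 0 <= a -> 0 <= Ufrac a d i.
Proof. by move=> a_ge0; apply: sumr_ge0 => k _; rewrite mulr_ge0 ?exprn_ge0. Qed.

Lemma Ufrac_shift (R : realFieldType) (a : R) d i :
  Ufrac a d i.+1 = (d 0%N)%:R * a + a * Ufrac a (fun k => d k.+1) i.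
Proof.
rewrite /Ufrac big_ord_recl mulr_sumr; congr (_ + _); apply: eq_bigr => k _.
by rewrite exprS mulrCA.
Qed.

Section Alpha.
Variable m : nat.
Hypothesis m_ge3 : (3 <= m)%N.
Local Notation U := (Useq m).
Variable R : realFieldType.
Variable a : R.
Hypothesis a_gt0 : 0 < a.
Hypothesis a_lt1 : a < 1.
Hypothesis a_root : a * a = m%:R * a - 1.

Lemma UseqSS_R k : (U k.+2)%:R = m%:R * (U k.+1)%:R - (U k)%:R :> R.
Proof. by rewrite -natrM -(UseqSS m_ge3) natrD addrK. Qed.

Lemma expr_alphaSS k : a ^+ k.+2 = m%:R * a ^+ k.+1 - a ^+ k.
Proof. by rewrite !exprSr -mulrA a_root; ring. Qed.

Lemma Useq_mul_alpha k : (U k.+1)%:R * a = (U k)%:R + a ^+ k.+2.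
Proof.
suff [] : (U k.+1)%:R * a = (U k)%:R + a ^+ k.+2 /\
          (U k.+2)%:R * a = (U k.+1)%:R + a ^+ k.+3 by [].
elim: k => [|k [IH1 IH2]].
  by rewrite UseqSS_R !expr_alphaSS expr1 expr0 /=; split; ring.
split=> //; rewrite (UseqSS_R k.+1) mulrBl -mulrA IH2 IH1 (expr_alphaSS k.+2) UseqSS_R; ring.
Qed.

Lemma Uprefix_mul_alpha d i :
  (Uprefix m d i.+1)%:R * a = (Uprefix m (fun k => d k.+1) i)%:R + Ufrac a d i.+1.
Proof.
elim: i => [|i IH].
  rewrite /Uprefix /Ufrac !big_ord_recr !big_ord0 /= !add0n !add0r.
  by rewrite !muln1 natrD !natrM mulrDl -mulrA expr2 a_root; ring.
rewrite UprefixS UfracS natrD mulrDl IH natrM -mulrA Useq_mul_alpha.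
by rewrite UprefixS natrD natrM; ring.
Qed.

Section GreedyFrac.
Variable d : nat -> nat.
Hypothesis greedy_d : forall i, (Uprefix m d i < U i.+1)%N.

(* Strengthened as in [Uprefix_shift_bounds]. *)
Lemma Ufrac_bounds i :
  Ufrac a d i <= 1 - (1 - a) * a ^+ i.+1 /\
  ((Uprefix m d i + U i < U i.+1)%N -> Ufrac a d i <= 1 - a ^+ i.+1).
Proof.
have a0 := a_gt0; have a1 := a_lt1; have aa := a_root.
have ma_le1 : (m%:R - 1) * a <= 1.
  have : 0 <= a * (1 - a) by rewrite mulr_ge0 ?subr_ge0 ?ltW.
  nra.
have digit_le (c k : nat) (x : R) : (c + k <= m)%N -> 0 <= x ->
    c%:R * x <= (m%:R - k%:R) * x.
  by move=> ck x_ge0; apply: ler_wpM2r => //; rewrite lerBrDr -natrD ler_nat.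
elim: i => [|i [IHle IHroom]].
  have := greedy_d 0; rewrite /Ufrac /Uprefix !big_ord_recr !big_ord0 /=.
  rewrite !add0n add0r muln1 expr1 => d0_lt; split=> [|d0_room].
  - by have := digit_le (d 0%N) 1%N a ltac:(lia) (ltW a0); lra.
  - by have := digit_le (d 0%N) 2%N a ltac:(lia) (ltW a0); lra.
have := greedy_d i.+1; rewrite UprefixS UfracS (exprSr a i.+1).
have := UseqSS m_ge3 i; have := Useq_ltS m_ge3 i; have := Useq_ltS m_ge3 i.+1.
have P_gt0 : 0 < a ^+ i.+1 by apply: exprn_gt0.
move: IHle IHroom P_gt0.
set c := d i.+1; set u0 := U i; set u1 := U i.+1; set u2 := U i.+2.
set n1 := Uprefix m d i; set S := Ufrac a d i; set P := a ^+ i.+1.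
move=> IHle IHroom P_gt0 lt_u1 lt_u0 rec_u0 greedy_i1.
have Pa_ge0 : 0 <= P * a by rewrite mulr_ge0 ?ltW.
have Paa : P * a * a = m%:R * (P * a) - P by rewrite -mulrA aa; ring.
have room : (n1 + m.-1 * u1 < u2)%N -> S <= 1 - P.
  by move=> h; apply: IHroom; nia.
have digit_eq (k : nat) : (c + k = m)%N ->
    c%:R * (P * a) + k%:R * (P * a) = m%:R * (P * a).
  by move=> ck; rewrite -mulrDl -natrD ck.
split=> [|room_next].
- case: (ltngtP c m.-1) => [lt|gt|eq]; [| nia |].
  + by have := digit_le c 2%N (P * a) ltac:(lia) Pa_ge0; lra.
  + have := room ltac:(by rewrite -eq).
    by have := digit_eq 1%N ltac:(lia); lra.
- have Pa_le : (m%:R - 1) * (P * a) <= P by rewrite mulrCA; nra.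
  case: (ltngtP c (m - 2)) => [lt|gt|eq]; [| nia |].
  + by have := digit_le c 3%N (P * a) ltac:(lia) Pa_ge0; lra.
  + have := room ltac:(by move: room_next; rewrite -/c eq; nia).
    by have := digit_eq 2%N ltac:(lia); lra.
Qed.

Lemma Ufrac_lt1 i : Ufrac a d i < 1.
Proof.
have [Sle _] := Ufrac_bounds i.
have : 0 < (1 - a) * a ^+ i.+1 by rewrite mulr_gt0 ?subr_gt0 ?exprn_gt0.
lra.
Qed.

End GreedyFrac.

Lemma Ufrac_lt_alpha d i : (forall j, (Uprefix m d j < U j.+1)%N) ->
  (Ufrac a d i.+1 < a) = (d 0%N == 0%N).
Proof.
move=> greedy_d; have a0 := a_gt0.
have S'_ge0 := Ufrac_ge0 (fun k => d k.+1) i (ltW a0).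
have S'_lt1 := Ufrac_lt1 (greedy_shift m_ge3 greedy_d) i.
rewrite Ufrac_shift; case: (d 0%N) => [|c] /=.
  by rewrite mul0r add0r gtr_pMr.
have : a <= c.+1%:R * a by rewrite -[X in X <= _]mul1r ler_pM2r // ler1n.
have := mulr_ge0 (ltW a0) S'_ge0.
by move=> *; apply/negbTE; rewrite -leNgt; lra.
Qed.

End Alpha.

Lemma eq_count_add (T : Type) (p q r s : pred T) (l : seq T) :
  (forall x, p x + q x = r x + s x)%N ->
  (count p l + count q l = count r l + count s l)%N.
Proof. by move=> pqrs; elim: l => //= x l IH; have := pqrs x; lia. Qed.

Section FracStep.
Variable R : realType.
Variable a : R.
Hypothesis a_gt0 : 0 < a.
Hypothesis a_lt1 : a < 1.

Lemma fracpart_itv (x : R) : 0 <= fracpart x < 1.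
Proof.
have /andP[fl_le lt_fl] := floor_itv x; rewrite intrD in lt_fl.
by rewrite /fracpart; apply/andP; split; lra.
Qed.

(** [x] wraps when adding [a] carries into the integer part. *)
Local Notation wraps x := (1 - a <= fracpart x).

Lemma floorDa (x : R) : Num.floor (x + a) = Num.floor x + (wraps x)%:Z.
Proof.
have a0 := a_gt0; have a1 := a_lt1.
have /andP[fl_le lt_fl] := floor_itv x; rewrite intrD in lt_fl.
apply: floor_def; case: (lerP (1 - a) (fracpart x)); rewrite /fracpart => w.
  by rewrite !intrD /=; apply/andP; split; lra.
by rewrite addr0 intrD; apply/andP; split; lra.
Qed.

Lemma fracpartDa (x : R) : fracpart (x + a) = fracpart x + a - (wraps x)%:R.
Proof. by rewrite /fracpart floorDa intrD; case: (wraps x); rewrite /= ?mulr1n; ring. Qed.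

Lemma wrapsE (x : R) : wraps x = (fracpart (x + a) < a).
Proof.
have a0 := a_gt0; have a1 := a_lt1.
have /andP[f_ge0 f_lt1] := fracpart_itv x.
rewrite fracpartDa; case: (lerP (1 - a) (fracpart x)) => w /=; apply/esym.
  by rewrite ?mulr1n; lra.
by apply/negbTE; rewrite -leNgt ?mulr0n; lra.
Qed.

(* Adding [a] to both [x] and [y] preserves the order of their fractional parts
   unless exactly one of them wraps. *)
Lemma fracpartDa_le (x y : R) :
  ((fracpart (x + a) <= fracpart (y + a))%R + (wraps y && ~~ wraps x) =
   (fracpart x <= fracpart y)%R + (~~ wraps y && wraps x))%N.
Proof.
have a0 := a_gt0; have a1 := a_lt1.
have /andP[fx_ge0 fx_lt1] := fracpart_itv x; have /andP[fy_ge0 fy_lt1] := fracpart_itv y.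
rewrite !fracpartDa.
case: (lerP (1 - a) (fracpart x)) => wx; case: (lerP (1 - a) (fracpart y)) => wy /=;
  by do 2 case: lerP => ? //=; exfalso; lra.
Qed.

Lemma natrS_mul_a (k : nat) : k.+1%:R * a = k%:R * a + a.
Proof. by rewrite -natr1 mulrDl mul1r. Qed.

Lemma count_wraps n :
  (count (fun k : nat => wraps (k%:R * a)) (iota 1 n))%:Z = Num.floor (n.+1%:R * a).
Proof.
have a0 := a_gt0; have a1 := a_lt1.
elim: n => [|n IH].
  by apply/esym/floor_def; rewrite mul1r /=; apply/andP; split; lra.
rewrite -(addn1 n) iotaD count_cat /= addn0 PoszD IH addn1 add1n.
by rewrite [in RHS]natrS_mul_a floorDa.
Qed.

Lemma Palpha_step n :
  (Palpha a n.+1)%:Z =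
  (Palpha a n)%:Z + Num.floor (n%:R * a) + 1 - (wraps (n%:R * a))%:Z * n%:Z.
Proof.
have a0 := a_gt0; have a1 := a_lt1.
have frac_a : fracpart a = a.
  rewrite /fracpart (_ : Num.floor a = 0) ?subr0 //.
  by apply: floor_def; rewrite /=; apply/andP; split; lra.
have first_term : (fracpart (1%:R * a) <= fracpart (n.+1%:R * a)) = ~~ wraps (n%:R * a).
  by rewrite mul1r frac_a natrS_mul_a wrapsE leNgt.
have shifted := eq_count_add (iota 1 n)
  (fun k : nat => fracpartDa_le (k%:R * a) (n%:R * a)).
have wraps_n := count_wraps n; rewrite natrS_mul_a floorDa in wraps_n.
have nowraps_n : (count (fun k : nat => wraps (k%:R * a)) (iota 1 n) +
                  count (fun k : nat => ~~ wraps (k%:R * a)) (iota 1 n))%N = n.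
  by rewrite -[in RHS](size_iota 1 n) -(count_predC (fun k : nat => wraps (k%:R * a))).
rewrite /Palpha -add1n iotaD /= first_term (iotaDl 1 1 n) count_map.
rewrite (@eq_count _ _ (fun k : nat => fracpart (k%:R * a + a) <= fracpart (n%:R * a + a)));
  last by move=> k /=; rewrite add1n !natrS_mul_a.
move: shifted wraps_n nowraps_n.
(* The counts are named so that [lia] treats them as atoms. *)
case: (wraps (n%:R * a)) => /=; rewrite ?count_pred0;
  set P := count (fun k : nat => fracpart (k%:R * a) <= _) _;
  set A := count (fun k : nat => fracpart (k%:R * a + a) <= _) _;
  set W := count (fun k : nat => wraps (k%:R * a)) _;
  set F := Num.floor _; set C := count _ _; clearbody P A W F C; lia.
Qed.

End FracStep.

Section Expansion.
Variable m : nat.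
Hypothesis m_ge3 : (3 <= m)%N.
Local Notation U := (Useq m).

Lemma Uprefix_Uval s j : (size s <= j.+1)%N -> Uprefix m (nth 0%N s) j = Uval m s.
Proof.
move=> le_sj; rewrite /Uval /Uprefix (big_ord_widen j.+1 (fun i => nth 0 s i * U i)%N le_sj).
by rewrite [RHS]big_mkcond; apply: eq_bigr => i _; case: ltnP => // /(nth_default 0%N) ->.
Qed.

Lemma Uprefix_behead s j :
  Uprefix m (fun k => nth 0%N s k.+1) j = Uprefix m (nth 0%N (behead s)) j.
Proof. by apply: eq_bigr => k _; rewrite nth_behead. Qed.

Lemma is_Uexp_greedy s z : is_Uexp m s z -> forall j, (Uprefix m (nth 0%N s) j < U j.+1)%N.
Proof.
case=> _ _ greedy_s j; case: (ltnP j (size s)) => [|le_sj]; first exact: greedy_s.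
rewrite Uprefix_Uval; last exact: leqW.
case: s greedy_s le_sj => [|x s] greedy_s le_sj; first by rewrite /Uval big_ord0 Useq_gt0.
have := greedy_s (size s) (ltnSn _); rewrite -/(Uprefix _ _ _) Uprefix_Uval //.
by move=> lt_s; apply: leq_trans lt_s _; apply: leq_Useq m_ge3 _ _ (leqW le_sj).
Qed.

Lemma is_Uexp_behead s z : is_Uexp m s z -> is_Uexp m (behead s) (Uval m (behead s))%:Z.
Proof.
move=> Us; split=> // [|i _].
  by case: Us => + _ _; case: s => [|x [|y l]].
rewrite -/(Uprefix _ _ _) -Uprefix_behead.
exact: (greedy_shift m_ge3 (is_Uexp_greedy Us) i).
Qed.

End Expansion.

Section ExpansionAlpha.
Variable m : nat.
Hypothesis m_ge3 : (3 <= m)%N.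
Variable R : realType.
Variable a : R.
Hypothesis a_gt0 : 0 < a.
Hypothesis a_lt1 : a < 1.
Hypothesis a_root : a * a = m%:R * a - 1.

Lemma Uval_mul_alpha s :
  (Uval m s)%:R * a = (Uval m (behead s))%:R + Ufrac a (nth 0%N s) (size s).+1.
Proof.
rewrite -(@Uprefix_Uval m s (size s).+1) ?leqW //.
rewrite -(@Uprefix_Uval m (behead s) (size s)); last first.
  by rewrite size_behead (leq_trans (leq_pred _)).
by rewrite -Uprefix_behead Uprefix_mul_alpha.
Qed.

Section Uexp.
Variables (s : seq nat) (z : int).
Hypothesis Us : is_Uexp m s z.

Lemma Ufrac_Uexp_itv : 0 <= Ufrac a (nth 0%N s) (size s).+1 < 1.
Proof.
by rewrite Ufrac_ge0 ?ltW // (Ufrac_lt1 m_ge3 a_gt0 a_lt1 a_root (is_Uexp_greedy m_ge3 Us)).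
Qed.

Lemma floor_Uval_mul_alpha : Num.floor ((Uval m s)%:R * a) = (Uval m (behead s))%:Z.
Proof.
have /andP[S_ge0 S_lt1] := Ufrac_Uexp_itv.
by apply: floor_def; rewrite Uval_mul_alpha intrD -!pmulrn /=; apply/andP; split; lra.
Qed.

Lemma fracpart_Uval_mul_alpha :
  fracpart ((Uval m s)%:R * a) = Ufrac a (nth 0%N s) (size s).+1.
Proof.
by rewrite /fracpart floor_Uval_mul_alpha -pmulrn Uval_mul_alpha addrAC subrr add0r.
Qed.

End Uexp.

Lemma Palpha_deltaE n s t : is_Uexp m s n%:Z -> is_Uexp m t n.+1%:Z ->
  (Palpha a n.+1)%:Z - (Palpha a n)%:Z =
  (Uval m (behead s))%:Z + 1 - (head 0%N t == 0%N)%:Z * n%:Z.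
Proof.
move=> Us Ut.
have [n_eq n1_eq] : n = Uval m s /\ n.+1 = Uval m t.
  by case: Us Ut => _ + _ [_ + _] => /eqP + /eqP; rewrite !eqz_nat => /eqP-> /eqP->.
have wraps_head : (1 - a <= fracpart (n%:R * a)) = (head 0%N t == 0%N).
  rewrite (wrapsE a_gt0 a_lt1) -natrS_mul_a n1_eq (fracpart_Uval_mul_alpha Ut).
  rewrite (Ufrac_lt_alpha m_ge3 a_gt0 a_lt1 a_root) ?nth0 //.
  exact: (is_Uexp_greedy m_ge3 Ut).
have floor_n : Num.floor (n%:R * a) = (Uval m (behead s))%:Z.
  by rewrite n_eq (floor_Uval_mul_alpha Us).
by rewrite (Palpha_step a_gt0 a_lt1) wraps_head floor_n; ring.
Qed.

End ExpansionAlpha.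

Lemma inv_beta_root (R : rcfType) (m : nat) : (3 <= m)%N ->
  let alpha : R := 1 / ((m%:R + Num.sqrt (m%:R ^+ 2 - 4)) / 2) in
  [/\ 0 < alpha, alpha < 1 & alpha * alpha = m%:R * alpha - 1].
Proof.
move=> m_ge3 /=.
have m3 : 3 <= m%:R :> R by rewrite (ler_nat R 3).
set r := Num.sqrt _; set beta := (m%:R + r) / 2; set alpha := 1 / beta.
have r_ge0 : 0 <= r := sqrtr_ge0 _.
have rr : r * r = m%:R * m%:R - 4 by rewrite -expr2 sqr_sqrtr expr2 //; nra.
have beta_gt1 : 1 < beta by rewrite /beta; lra.
have beta_root : beta * beta = m%:R * beta - 1 by rewrite /beta; lra.
have alpha_beta : alpha * beta = 1 by rewrite /alpha mul1r mulVf //; lra.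
have alpha_gt0 : 0 < alpha by rewrite /alpha divr_gt0 //; lra.
split=> //; first nra.
have : alpha * alpha * (beta * beta) = alpha * alpha * (m%:R * beta - 1) by rewrite beta_root.
nra.
Qed.

Theorem corollary1 (R : realType) (m n : nat) (s t : seq nat) :
  (3 <= m)%N -> (1 <= n)%N ->
  is_Uexp m s n%:Z ->
  is_Uexp m t (n.+1)%:Z ->
  let beta : R := (m%:R + Num.sqrt (m%:R ^+ 2 - 4)) / 2 in
  let alpha : R := 1 / beta in
  let dP : int := (Palpha alpha n.+1)%:Z - (Palpha alpha n)%:Z in
  (head 0%N t = 0%N -> is_Uexp m (behead s) (n%:Z + dP - 1)) /\
  (head 0%N t != 0%N -> is_Uexp m (behead s) (dP - 1)).
Proof.
move=> m_ge3 _ Us Ut beta alpha dP.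
have [alpha_gt0 alpha_lt1 alpha_root] := inv_beta_root R m_ge3.
have dPE : dP = (Uval m (behead s))%:Z + 1 - (head 0%N t == 0%N)%:Z * n%:Z :=
  Palpha_deltaE m_ge3 alpha_gt0 alpha_lt1 alpha_root Us Ut.
have Ub (z : int) : z = (Uval m (behead s))%:Z -> is_Uexp m (behead s) z.
  by move=> ->; exact: (is_Uexp_behead m_ge3 Us).
by split=> [/eqP t0 | /negbTE t0]; apply: Ub; rewrite dPE t0 /=; ring.
Qed.
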